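(* Let $\varepsilon>0$ and let $f$ be continuous on $[0,1]$. Let $u\in H^1_0(0,1)$ be the solution of $$\varepsilon\,(u',v')+(u',v)=(f,v)\quad\text{for all } v\in H^1_0(0,1).$$ Let $n\ge 2$, $h=1/n$, $x_j=jh$ ($j=0,\dots,n$). Let $\mathcal{M}_h\subset H^1_0(0,1)$ be the space of continuous functions on $[0,1]$ that are linear on each $[x_{j-1},x_j]$ and vanish at $0$ and $1$, and let $V_h\subset H^1_0(0,1)$ be the space of continuous functions on $[0,1]$ that are quadratic polynomials on each $[x_{j-1},x_j]$ and vanish at $0$ and $1$. Let $(w_h,u_h)\in V_h\times\mathcal{M}_h$ be the solution of the saddle point least squares ($P^1$–$P^2$) discretization $$\begin{aligned} (w_h',v_h')+\varepsilon\,(u_h',v_h')+(u_h',v_h)&=(f,v_h)&&\text{for all } v_h\in V_h,\\ \varepsilon\,(q_h',w_h')+(q_h',w_h)&=0&&\text{for all } q_h\in\mathcal{M}_h. \end{aligned}$$ For $v\in H^1_0(0,1)$ define $\|v\|_*^2:=\varepsilon^2\|v'\|^2+\|v\|^2-\overline{v}^2$, where $\|\cdot\|$ is the $L^2(0,1)$ norm and $\overline{v}=\int_0^1 v(x)\,dx$. Then $$\|u-u_h\|_*\le \inf_{p_h\in\mathcal{M}_h}\|u-p_h\|_*\le \|u-u_I\|_*,$$ where $u_I\in\mathcal{M}_h$ is the linear interpolant of $u$ at the nodes $x_0,\dots,x_n$.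
   Context: $(\cdot,\cdot)$ denotes the $L^2(0,1)$ inner product. Note $\|v\|^2-\overline{v}^2=\|v-\overline{v}\|^2$, so $\|\cdot\|_*$ is a norm on $H^1_0(0,1)$. *)

From HB Require Import structures.
From mathcomp Require Import all_boot all_order all_algebra.
From mathcomp Require Import all_classical all_reals all_analysis.
Set Implicit Arguments. Unset Strict Implicit. Unset Printing Implicit Defensive.
Import Order.TTheory GRing.Theory Num.Theory.
Import numFieldNormedType.Exports.
Local Open Scope classical_set_scope.
Local Open Scope ring_scope.

Section Defs.
Context {R : realType}.
Notation mu := (@lebesgue_measure R).

Definition I01 : set R := [set` `[0, 1]%R].

Definition ip (f g : R -> R) : R := \int[mu]_(x in I01) (f x * g x).

Definition l2sq (f : R -> R) : R := ip f f.

Definition mean (v : R -> R) : R := \int[mu]_(x in I01) v x.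

(** In one dimension, H^1_0(0,1) consists exactly of the functions
    v(x) = int_0^x dv with dv in L^2(0,1) and v(1) = 0 (absolutely
    continuous representative); dv is the weak derivative v'. *)
Definition H10 (v dv : R -> R) : Prop :=
  [/\ mu.-integrable I01 (EFin \o dv),
      mu.-integrable I01 (EFin \o (fun x => dv x ^+ 2)),
      (forall x, 0 <= x <= 1 -> v x = \int[mu]_(t in [set` `[0, x]%R]) dv t)
    & v 1 = 0].

Definition star_norm (eps : R) (v dv : R -> R) : R :=
  Num.sqrt (eps ^+ 2 * l2sq dv + l2sq v - mean v ^+ 2).

Definition node (n j : nat) : R := j%:R / n%:R.

Definition in_Mh (n : nat) (v : R -> R) : Prop :=
  [/\ {within I01, continuous v},
      (forall j : nat, (j < n)%N -> exists a b : R,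
         forall x, node n j <= x <= node n j.+1 -> v x = a * x + b),
      v 0 = 0 & v 1 = 0].

Definition in_Vh (n : nat) (v : R -> R) : Prop :=
  [/\ {within I01, continuous v},
      (forall j : nat, (j < n)%N -> exists a b c : R,
         forall x, node n j <= x <= node n j.+1 -> v x = a * x ^+ 2 + b * x + c),
      v 0 = 0 & v 1 = 0].

Definition Mh_errors (eps : R) (n : nat) (u du : R -> R) : set R :=
  [set e | exists p dp : R -> R, [/\ H10 p dp, in_Mh n p &
       e = star_norm eps (fun x => u x - p x) (fun x => du x - dp x)]].

End Defs.

(* The star norm is the norm of the inner product
     <v, w>_* = eps^2 (v', w') + (v, w) - mean v * mean w
   on H^1_0(0,1), and the discrete error u - u_h is <.,.>_*-orthogonal to M_h.  Indeed, for
   d in H^1_0 the function star_dual d = eps d - \int_0^x d + (mean d) x lies in H^1_0, satisfies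
   eps (v', (star_dual d)') + (v', star_dual d) = <v, d>_* for every v in H^1_0 (two integrations
   by parts), and is a piecewise quadratic, i.e. lies in V_h, when d is in M_h.  Testing the
   continuous and the first discrete equation with star_dual d gives <u - u_h, d>_* =
   (w_h', (star_dual d)'), which vanishes by the second discrete equation with q = d.
   Pythagoras then gives ||u - u_h||_* <= ||u - p_h||_* for every p_h in M_h, in particular
   for p_h = u_I. *)

From HB Require Import structures.
From mathcomp Require Import all_boot all_order all_algebra.
From mathcomp Require Import all_classical all_reals all_analysis.
From mathcomp Require Import measurable_realfun ring lra.
Import Order.TTheory GRing.Theory Num.Theory.
Import numFieldNormedType.Exports.
Set Implicit Arguments. Unset Strict Implicit. Unset Printing Implicit Defensive.
Local Open Scope classical_set_scope.
Local Open Scope ring_scope.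

Section square_integrable.
Context {R : realType}.
Notation mu := (@lebesgue_measure R).
Variable D : set R.
Hypotheses (mD : measurable (D : set (measurableTypeR R))) (muD : (mu D < +oo)%E).

Definition L2 (f : R -> R) : Prop :=
  measurable_fun D f /\ mu.-integrable D (EFin \o (fun x => f x ^+ 2)).

Lemma integrable_cst (c : R) : mu.-integrable D (EFin \o cst c).
Proof.
apply/integrableP; split; first exact/measurable_EFinP/measurable_cst.
rewrite (_ : (fun x => _) = cst `|c|%:E); last exact/funext.
by rewrite integral_cst //= lte_mul_pinfty.
Qed.

Lemma L2_cst (c : R) : L2 (fun=> c).
Proof. by split; [exact: measurable_cst | exact: (integrable_cst (c ^+ 2))]. Qed.

Lemma integrable_dominated (f g : R -> R) : measurable_fun D f ->
  mu.-integrable D (EFin \o g) -> (forall x, `|f x| <= g x) ->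
  mu.-integrable D (EFin \o f).
Proof.
move=> mf ig fg; apply: (le_integrable mD _ _ ig); first exact/measurable_EFinP.
by move=> x _; rewrite /= lee_fin (le_trans (fg x)) // ler_norm.
Qed.

Lemma L2_integrableM (f g : R -> R) : L2 f -> L2 g ->
  mu.-integrable D (EFin \o (fun x => f x * g x)).
Proof.
move=> [mf if2] [mg ig2].
apply: (@integrable_dominated _ (fun x => f x ^+ 2 + g x ^+ 2)).
- exact: measurable_funM.
- by apply: (eq_integrable mD _ _ _ (integrableD mD if2 ig2)) => x _; rewrite /= EFinD.
- move=> x; rewrite normrM.
  by have [h|h] := ger0P (f x); have [h'|h'] := ger0P (g x); nra.
Qed.

Lemma L2_integrable (f : R -> R) : L2 f -> mu.-integrable D (EFin \o f).
Proof.
move=> Lf; have := L2_integrableM Lf (L2_cst 1).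
by apply: (eq_integrable mD) => x _; rewrite /= mulr1.
Qed.

Lemma L2D (f g : R -> R) : L2 f -> L2 g -> L2 (fun x => f x + g x).
Proof.
move=> [mf if2] [mg ig2]; split; first exact: measurable_funD.
apply: (@integrable_dominated _ (fun x => 2 * (f x ^+ 2 + g x ^+ 2))).
- by apply: measurable_funX; exact: measurable_funD.
- apply: (eq_integrable mD _ _ _ (integrableZl mD 2 (integrableD mD if2 ig2))) => x _.
  by rewrite /= EFinM EFinD.
- by move=> x; rewrite ger0_norm ?sqr_ge0 //; have := sqr_ge0 (f x - g x); nra.
Qed.

Lemma L2Z (c : R) (f : R -> R) : L2 f -> L2 (fun x => c * f x).
Proof.
move=> [mf if2]; split; first exact: measurable_funM.
apply: (eq_integrable mD _ _ _ (integrableZl mD (c ^+ 2) if2)) => x _.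
by rewrite /= -EFinM exprMn.
Qed.

Lemma L2B (f g : R -> R) : L2 f -> L2 g -> L2 (fun x => f x - g x).
Proof.
move=> Lf Lg; rewrite (_ : (fun x => _) = fun x => f x + (-1) * g x).
  exact: L2D (L2Z _ Lg).
by apply/funext => x; rewrite mulN1r.
Qed.

End square_integrable.

Section unit_interval.
Context {R : realType}.
Notation mu := (@lebesgue_measure R).

Lemma measurable_I01 : measurable (I01 : set (measurableTypeR R)).
Proof. exact: measurable_itv. Qed.

Lemma lebesgue_measure_I01 : mu I01 = 1%:E.
Proof. by rewrite /I01 lebesgue_measure_itv /= lte_fin ltr01 oppr0 adde0. Qed.

Let mI01 := measurable_I01.
Let muI01 : (mu I01 < +oo)%E. Proof. by rewrite lebesgue_measure_I01 ltry. Qed.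

Lemma continuous_L2 (f : R -> R) : {within I01, continuous f} -> L2 I01 f.
Proof.
move=> cf; split; first exact: subspace_continuous_measurable_fun.
apply: continuous_compact_integrable; first exact: segment_compact.
by move=> x; apply: cvgM; exact: cf.
Qed.

Lemma mean_cst (c : R) : mean (fun=> c) = c.
Proof.
rewrite /mean Rintegral_cst // (_ : fine _ = fine (1%:E : \bar R)) ?mulr1 //.
by congr fine; exact: lebesgue_measure_I01.
Qed.

Lemma ipC (f g : R -> R) : ip f g = ip g f.
Proof. by apply: eq_Rintegral => x _; rewrite mulrC. Qed.

Section ip_linear.
Variables f g h : R -> R.
Hypotheses (Lf : L2 I01 f) (Lg : L2 I01 g) (Lh : L2 I01 h).

Lemma ipDl : ip (fun x => f x + g x) h = ip f h + ip g h.
Proof.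
rewrite /ip -RintegralD //; last 2 first.
- exact: L2_integrableM.
- exact: L2_integrableM.
by apply: eq_Rintegral => x _; rewrite mulrDl.
Qed.

Lemma ipBl : ip (fun x => f x - g x) h = ip f h - ip g h.
Proof.
rewrite /ip -RintegralB //; last 2 first.
- exact: L2_integrableM.
- exact: L2_integrableM.
by apply: eq_Rintegral => x _; rewrite mulrBl.
Qed.

Lemma ipDr : ip h (fun x => f x + g x) = ip h f + ip h g.
Proof. by rewrite ipC ipDl (ipC f) (ipC g). Qed.

Lemma ipBr : ip h (fun x => f x - g x) = ip h f - ip h g.
Proof. by rewrite ipC ipBl (ipC f) (ipC g). Qed.

Lemma ipZl (c : R) : ip (fun x => c * f x) h = c * ip f h.
Proof.
rewrite /ip -RintegralZl //; last exact: L2_integrableM.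
by apply: eq_Rintegral => x _; rewrite mulrA.
Qed.

Lemma ipZr (c : R) : ip h (fun x => c * f x) = c * ip h f.
Proof. by rewrite ipC ipZl ipC. Qed.

Lemma meanD : mean (fun x => f x + g x) = mean f + mean g.
Proof. by rewrite /mean RintegralD //; exact: L2_integrable. Qed.

End ip_linear.

Lemma ip_cstr (c : R) (f : R -> R) : L2 I01 f -> ip f (fun=> c) = c * mean f.
Proof.
move=> Lf; rewrite /ip /mean -RintegralZl //; last exact: L2_integrable.
by apply: eq_Rintegral => x _; rewrite mulrC.
Qed.

Lemma l2sq_ge0 (f : R -> R) : 0 <= l2sq f.
Proof. by apply: Rintegral_ge0 => x _; rewrite -expr2 sqr_ge0. Qed.

Lemma sqr_mean_le_l2sq (f : R -> R) : L2 I01 f -> mean f ^+ 2 <= l2sq f.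
Proof.
move=> Lf; set m := mean f.
have Lm : L2 I01 (fun=> m) by exact: L2_cst.
have Lfm : L2 I01 (fun x => f x - m) by exact: L2B.
have := l2sq_ge0 (fun x => f x - m).
rewrite /l2sq ipBl // !ipBr // !ip_cstr // mean_cst (ipC (fun=> m)) ip_cstr //.
by rewrite -/(l2sq f) -/m; lra.
Qed.

End unit_interval.

Section primitive.
Context {R : realType}.
Notation mu := (@lebesgue_measure R).
Let mI01 := @measurable_I01 R.
Let muI01 : (mu I01 < +oo)%E. Proof. by rewrite lebesgue_measure_I01 ltry. Qed.

Definition L2_primitive (a da : R -> R) : Prop :=
  [/\ mu.-integrable I01 (EFin \o da),
      mu.-integrable I01 (EFin \o (fun x => da x ^+ 2))
    & forall x, 0 <= x <= 1 -> a x = \int[mu]_(t in [set` `[0, x]]) da t].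

Lemma H10P {a da : R -> R} : H10 a da <-> L2_primitive a da /\ a 1 = 0.
Proof. by split => [[]|[[]]]. Qed.

Lemma subset_itv0x_I01 (x : R) : x <= 1 -> [set` `[0, x]] `<=` I01.
Proof. by move=> x1; apply: subset_itvl; rewrite bnd_simp. Qed.

Lemma integrable_itv0x (f : R -> R) (x : R) : x <= 1 ->
  mu.-integrable I01 (EFin \o f) -> mu.-integrable [set` `[0, x]] (EFin \o f).
Proof.
by move=> x1; apply: integrableS => //; exact: subset_itv0x_I01.
Qed.

Section primitive_props.
Variables a da : R -> R.
Hypothesis Pa : L2_primitive a da.

Lemma L2_primitive_L2d : L2 I01 da.
Proof.
by case: Pa => ia ia2 _; split => //; apply/measurable_EFinP; exact: measurable_int ia.
Qed.

Lemma L2_primitive_continuous : {within I01, continuous a}.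
Proof.
case: Pa => ia _ ha.
apply: subspace_eq_continuous (parameterized_integral_continuous ler01 ia) => x.
by rewrite inE /= in_itv /= => /ha; rewrite /from_subspace /= => ->.
Qed.

Lemma L2_primitive_L2 : L2 I01 a.
Proof. exact/continuous_L2/L2_primitive_continuous. Qed.

Lemma L2_primitive0 : a 0 = 0.
Proof. by case: Pa => _ _ ->; rewrite ?lexx ?ler01 // set_itv1 Rintegral_set1. Qed.

Lemma L2_primitive1 : a 1 = mean da.
Proof. by case: Pa => _ _ ->; rewrite ?ler01 ?lexx. Qed.

End primitive_props.

Lemma L2_primitiveD (a da b db : R -> R) : L2_primitive a da -> L2_primitive b db ->
  L2_primitive (fun x => a x + b x) (fun x => da x + db x).
Proof.
move=> Pa Pb; have [ia _ ha] := Pa; have [ib _ hb] := Pb; split.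
- by apply: (eq_integrable mI01 _ _ _ (integrableD mI01 ia ib)) => x _; rewrite /= EFinD.
- by case: (L2D mI01 (L2_primitive_L2d Pa) (L2_primitive_L2d Pb)).
- move=> x /[dup] x01 /andP[_ x1].
  by rewrite ha // hb // RintegralD //; exact: integrable_itv0x.
Qed.

Lemma L2_primitiveZ (c : R) (a da : R -> R) : L2_primitive a da ->
  L2_primitive (fun x => c * a x) (fun x => c * da x).
Proof.
move=> Pa; have [ia _ ha] := Pa; split.
- by apply: (eq_integrable mI01 _ _ _ (integrableZl mI01 c ia)) => x _; rewrite /= EFinM.
- by case: (L2Z mI01 c (L2_primitive_L2d Pa)).
- move=> x /[dup] x01 /andP[_ x1].
  by rewrite ha // RintegralZl //; exact: integrable_itv0x.
Qed.

Lemma L2_primitiveB (a da b db : R -> R) : L2_primitive a da -> L2_primitive b db ->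
  L2_primitive (fun x => a x - b x) (fun x => da x - db x).
Proof.
move=> Pa Pb; have := L2_primitiveD Pa (L2_primitiveZ (-1) Pb).
by congr L2_primitive; apply/funext => x; rewrite mulN1r.
Qed.

Lemma L2_primitive_id : L2_primitive id (fun=> 1 : R).
Proof.
split; [exact: integrable_cst | exact: integrable_cst |].
move=> x /andP[x0 _]; rewrite Rintegral_cst; last exact: measurable_itv.
rewrite mul1r (_ : fine _ = fine (if (0 < x)%R then (x - 0)%:E else 0%E)); last first.
  by congr fine; exact: lebesgue_measure_itv.
by case: ltP => [_|]; rewrite ?subr0 //= => ?; lra.
Qed.

Lemma L2_primitive_integral (f : R -> R) : {within I01, continuous f} ->
  L2_primitive (fun x => \int[mu]_(t in [set` `[0, x]]) f t) f.
Proof.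
move=> /continuous_L2 Lf.
by split => //; [exact: L2_integrable | case: Lf].
Qed.

End primitive.

Section diagonal_split.
Context {R : realType}.
Notation mu := (@lebesgue_measure R).
Let T := measurableTypeR R.
Local Open Scope ereal_scope.
Variables F G : T -> R.
Hypotheses (iF : mu.-integrable setT (EFin \o F)) (iG : mu.-integrable setT (EFin \o G)).

Let mF : measurable_fun setT F.
Proof. by apply/measurable_EFinP; exact: measurable_int iF. Qed.

Let mG : measurable_fun setT G.
Proof. by apply/measurable_EFinP; exact: measurable_int iG. Qed.

Let K (z : T * T) : R := (F z.1 * G z.2)%R.

Let mK : measurable_fun setT K.
Proof.
by apply: measurable_funM; [exact: measurableT_comp mF _ | exact: measurableT_comp mG _].
Qed.

Let iK : (mu \x mu).-integrable setT (EFin \o K).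
Proof.
apply/integrable12ltyP; first exact/measurable_EFinP.
have [_ hF] := integrableP _ _ _ iF; have [_ hG] := integrableP _ _ _ iG.
have mGa : measurable_fun setT (fun y => `|(G y)%:E|) by exact/measurableT_comp/measurable_EFinP.
have mFa : measurable_fun setT (fun x => `|(F x)%:E|) by exact/measurableT_comp/measurable_EFinP.
have Kx x : \int[mu]_y `|(EFin \o K) (x, y)| = `|(F x)%:E| * \int[mu]_y `|(G y)%:E|.
  by rewrite -ge0_integralZl //; apply: eq_integral => y _; rewrite -abseM -EFinM.
under eq_integral do rewrite Kx.
rewrite ge0_integralZr //; last exact: integral_ge0.
apply: lte_mul_pinfty => //; first exact: integral_ge0.
by rewrite ge0_fin_numE //; exact: integral_ge0.
Qed.

Let iK_cut (c : T * T -> bool) : measurable_fun setT c ->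
  (mu \x mu).-integrable setT (EFin \o (fun z => K z * (c z)%:R)%R).
Proof.
move=> mc; apply: (le_integrable _ _ _ iK) => //.
  apply/measurable_EFinP/measurable_funM => //.
  exact: (measurableT_comp (f := fun b : bool => (b%:R : R))) mc.
by move=> z _; rewrite /= lee_fin normrM; case: (c z); rewrite ?normr1 ?normr0 ?mulr1 ?mulr0.
Qed.

Lemma integral_split_diagonal :
  \int[mu]_x \int[mu]_y (F x * G y * (y <= x)%R%:R)%:E
  + \int[mu]_y \int[mu]_x (F x * G y * (x < y)%R%:R)%:E
  = \int[mu]_x (F x)%:E * \int[mu]_y (G y)%:E.
Proof.
have mle : measurable_fun setT (fun z : T * T => (z.2 <= z.1)%R).
  exact: measurable_fun_ler measurable_snd measurable_fst.
have mlt : measurable_fun setT (fun z : T * T => (z.1 < z.2)%R).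
  exact: measurable_fun_ltr measurable_fst measurable_snd.
rewrite (integral12_prod_meas1 (iK_cut mle)) (integral21_prod_meas1 (iK_cut mlt)).
rewrite -integralD //; [|exact: iK_cut..].
rewrite (eq_integral (EFin \o K)); last first.
  move=> z _; rewrite /= -EFinD -mulrDr.
  have -> : ((z.2 <= z.1)%R%:R + (z.1 < z.2)%R%:R = 1 :> R)%R.
    by case: leP => _; rewrite ?addr0 ?add0r.
  by rewrite mulr1.
rewrite -(integral12_prod_meas1 iK) /fubini_F.
rewrite (eq_integral (fun x => (F x)%:E * \int[mu]_y (G y)%:E)); last first.
  by move=> x _; rewrite -integralZl //; apply: eq_integral => y _; rewrite -EFinM.
by rewrite -(fineK (integrable_fin_num measurableT iG)) integralZr.
Qed.

End diagonal_split.

Section integration_by_parts.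
Context {R : realType}.
Notation mu := (@lebesgue_measure R).
Let T := measurableTypeR R.
Let mI01 := @measurable_I01 R.

Let EFin_Rintegral (D : set T) (f : R -> R) : measurable D ->
  mu.-integrable D (EFin \o f) ->
  ((\int[mu]_(x in D) f x)%:E = \int[mu]_x ((f \_ D) x)%:E)%E.
Proof.
move=> mD i; rewrite /Rintegral fineK; last exact: integrable_fin_num.
by rewrite integral_mkcond restrict_EFin.
Qed.

Let integrable_restrict_setT (D : set T) (f : R -> R) : measurable D ->
  mu.-integrable D (EFin \o f) -> mu.-integrable setT (EFin \o (f \_ D)).
Proof. by move=> mD /(integrable_mkcond _ mD).1; rewrite restrict_EFin. Qed.

Let memI01 (x : R) : (x \in (I01 : set R)) = (0 <= x <= 1).
Proof. by rewrite /I01 mem_setE in_itv. Qed.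

Variables a da b db : R -> R.
Hypotheses (Pa : L2_primitive a da) (Pb : L2_primitive b db).

Let lower_integral : (\int[mu]_(x in I01) (da x * b x)%:E =
  \int[mu]_x \int[mu]_y ((da \_ I01) x * (db \_ I01) y * (y <= x)%R%:R)%:E)%E.
Proof.
have [ia _ _] := Pa; have [ib _ hb] := Pb.
rewrite integral_mkcond; apply: eq_integral => x _; rewrite patchE memI01.
have [/andP[x0 x1]|x01] := boolP (0 <= x <= 1); last first.
  by apply/esym/integral0_eq => y _; rewrite patchE memI01 (negbTE x01) !mul0r.
rewrite hb ?x0 ?x1 // EFinM EFin_Rintegral //; last exact: integrable_itv0x.
rewrite -integralZl //; last exact/integrable_restrict_setT/integrable_itv0x.
apply: eq_integral => y _; rewrite -EFinM !patchE !memI01 mem_setE in_itv /=.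
have -> : point = 0 :> R by [].
have [y0|y0] := leP 0%R y; have [yx|yx] := leP y x; rewrite /= ?mulr0 ?mulr1 //.
by rewrite x0 x1 (le_trans yx x1).
Qed.

Let upper_integral : (\int[mu]_(y in I01) (a y * db y)%:E =
  \int[mu]_y \int[mu]_x ((da \_ I01) x * (db \_ I01) y * (x < y)%R%:R)%:E)%E.
Proof.
have [ia _ ha] := Pa; have [ib _ _] := Pb.
rewrite integral_mkcond; apply: eq_integral => y _; rewrite patchE memI01.
have [/andP[y0 y1]|y01] := boolP (0 <= y <= 1); last first.
  by apply/esym/integral0_eq => x _; rewrite !patchE !memI01 (negbTE y01) mulr0 mul0r.
have iy : mu.-integrable [set` `[0, y[] (EFin \o da).
  apply: integrableS ia => //; apply: subset_trans (subset_itv0x_I01 y1).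
  by apply: subset_itvl; rewrite bnd_simp.
rewrite ha ?y0 ?y1 // -Rintegral_itv_bndo_bndc // EFinM EFin_Rintegral //.
rewrite -integralZr //; last exact: integrable_restrict_setT.
apply: eq_integral => x _; rewrite -EFinM !patchE !memI01 mem_setE in_itv /=.
have -> : point = 0 :> R by [].
have [x0|x0] := leP 0%R x; have [xy|xy] := ltP x y; rewrite /= ?mulr0 ?mul0r ?mulr1 //.
by rewrite y0 y1 (le_trans (ltW xy) y1).
Qed.

Lemma L2_primitive_by_parts : ip da b + ip a db = a 1 * b 1.
Proof.
have [ia _ _] := Pa; have [ib _ _] := Pb.
have iF := integrable_restrict_setT mI01 ia; have iG := integrable_restrict_setT mI01 ib.
have fin_lower : (\int[mu]_(x in I01) (da x * b x)%:E)%E \is a fin_num.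
  by apply: integrable_fin_num => //; exact: L2_integrableM (L2_primitive_L2d Pa) (L2_primitive_L2 Pb).
have fin_upper : (\int[mu]_(x in I01) (a x * db x)%:E)%E \is a fin_num.
  by apply: integrable_fin_num => //; exact: L2_integrableM (L2_primitive_L2 Pa) (L2_primitive_L2d Pb).
apply: EFin_inj; rewrite /ip /Rintegral EFinD !fineK //.
rewrite lower_integral upper_integral integral_split_diagonal //.
by rewrite (L2_primitive1 Pa) (L2_primitive1 Pb) /mean EFinM !EFin_Rintegral.
Qed.

End integration_by_parts.

Section piecewise_polynomial.
Context {R : realType}.
Notation mu := (@lebesgue_measure R).

Lemma Rintegral_affine (a b c x : R) : c <= x ->
  \int[mu]_(t in [set` `[c, x]]) (a * t + b) = a / 2 * (x ^+ 2 - c ^+ 2) + b * (x - c).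
Proof.
rewrite le_eqVlt => /predU1P[<-|cx].
  by rewrite set_itv1 Rintegral_set1 !subrr !mulr0 addr0.
have cont_affine : continuous (fun t : R => a * t + b).
  by move=> t; apply: cvgD; [apply: cvgM; [exact: cvg_cst | exact: cvg_id] | exact: cvg_cst].
pose F t : R := a / 2 * t ^+ 2 + b * t.
have cont_F : continuous F.
  by move=> t; apply: cvgD; apply: cvgM; [exact: cvg_cst | exact: cvgM | exact: cvg_cst | exact: cvg_id].
rewrite /Rintegral (continuous_FTC2 (F := F)) //.
- by rewrite -EFinB /F /=; ring.
- exact/continuous_subspaceT.
- split; first by move=> t _; exact: ex_derive.
  + exact/cvg_at_right_filter/cont_F.
  + exact/cvg_at_left_filter/cont_F.
- by move=> t _; rewrite derive1E derive_val /GRing.scale /= !mulr1; field.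
Qed.

Lemma primitive_affine_piece (d : R -> R) (c e a b : R) : 0 <= c -> e <= 1 ->
  mu.-integrable I01 (EFin \o d) -> (forall x, c <= x <= e -> d x = a * x + b) ->
  exists k, forall x, c <= x <= e ->
    \int[mu]_(t in [set` `[0, x]]) d t = a / 2 * x ^+ 2 + b * x + k.
Proof.
move=> c0 e1 intd daff.
exists (\int[mu]_(t in [set` `[0, c]]) d t - a / 2 * c ^+ 2 - b * c) => x /andP[cx xe].
have x1 : x <= 1 by exact: le_trans e1.
have split_at_c : \int[mu]_(t in [set` `[0, x]]) d t - \int[mu]_(t in [set` `[0, c]]) d t
    = \int[mu]_(t in [set` `[c, x]]) (a * t + b).
  rewrite Rintegral_itvB ?bnd_simp //; last exact: integrable_itv0x.
  rewrite Rintegral_itv_obnd_cbnd; last first.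
    apply: (integrableS measurable_I01) intd => //.
    apply: subset_trans (subset_itv0x_I01 x1).
    by apply: subset_itvr; rewrite bnd_simp.
  apply: eq_Rintegral => t; rewrite inE /= in_itv /= => /andP[ct tx].
  by rewrite daff // ct (le_trans tx xe).
move/eqP: split_at_c; rewrite Rintegral_affine // subr_eq => /eqP ->.
by ring.
Qed.

End piecewise_polynomial.

Section mesh.
Context {R : realType}.

Lemma node_ge0 (n j : nat) : 0 <= node n j :> R.
Proof. by rewrite /node divr_ge0. Qed.

Lemma node_le1 (n j : nat) : (j < n)%N -> node n j.+1 <= 1 :> R.
Proof. by move=> jn; rewrite /node ler_pdivrMr ?ltr0n ?(leq_ltn_trans _ jn) // mul1r ler_nat. Qed.

Lemma in_MhB (n : nat) (a b : R -> R) :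
  in_Mh n a -> in_Mh n b -> in_Mh n (fun x => a x - b x).
Proof.
move=> [ca pa a0 a1] [cb pb b0 b1]; split.
- by move=> x; apply: cvgB; [exact: ca | exact: cb].
- move=> j jn; have [a' [b' ha]] := pa j jn; have [a'' [b'' hb]] := pb j jn.
  by exists (a' - a''), (b' - b'') => x xj; rewrite ha // hb //; ring.
- by rewrite a0 b0 subr0.
- by rewrite a1 b1 subr0.
Qed.

End mesh.

Section star_dual.
Context {R : realType}.

Notation mu := (@lebesgue_measure R).
Let mI01 := @measurable_I01 R.
Let muI01 : (mu I01 < +oo)%E. Proof. by rewrite lebesgue_measure_I01 ltry. Qed.

Definition star_ip (eps : R) (v dv w dw : R -> R) : R :=
  eps ^+ 2 * ip dv dw + ip v w - mean v * mean w.

Lemma star_ip_ge0 (eps : R) (v dv : R -> R) : L2 I01 v -> 0 <= star_ip eps v dv v dv.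
Proof.
move=> Lv; have := sqr_mean_le_l2sq Lv; have := l2sq_ge0 dv.
have : 0 <= eps ^+ 2 := sqr_ge0 eps.
by rewrite /star_ip /l2sq; nra.
Qed.

Lemma star_norm_le_addr (eps : R) (v dv w dw : R -> R) :
  L2 I01 v -> L2 I01 dv -> L2 I01 w -> L2 I01 dw -> star_ip eps v dv w dw = 0 ->
  star_norm eps v dv <= star_norm eps (fun x => v x + w x) (fun x => dv x + dw x).
Proof.
move=> Lv Ldv Lw Ldw orth; apply: ler_wsqrtr.
have Lvw := L2D mI01 Lv Lw; have Ldvw := L2D mI01 Ldv Ldw.
rewrite /l2sq !ipDl // !ipDr // meanD //.
have := star_ip_ge0 eps dw Lw; move: orth.
by rewrite /star_ip (ipC w v) (ipC dw dv); nra.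
Qed.

Definition star_dual (eps : R) (d : R -> R) (x : R) : R :=
  eps * d x - \int[mu]_(t in [set` `[0, x]]) d t + mean d * x.

Definition star_dual_deriv (eps : R) (d dd : R -> R) (x : R) : R :=
  eps * dd x - d x + mean d.

Section star_dual_props.
Variables (eps : R) (d dd : R -> R).
Hypothesis Pd : L2_primitive d dd.

Let D (x : R) := \int[mu]_(t in [set` `[0, x]]) d t.
Let PD : L2_primitive D d := L2_primitive_integral (L2_primitive_continuous Pd).
Let Ld := L2_primitive_L2 Pd.
Let Ldd := L2_primitive_L2d Pd.

Lemma L2_primitive_star_dual : L2_primitive (star_dual eps d) (star_dual_deriv eps d dd).
Proof.
have := L2_primitiveD (L2_primitiveB (L2_primitiveZ eps Pd) PD)
  (L2_primitiveZ (mean d) L2_primitive_id).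
by congr L2_primitive; apply/funext => x; rewrite /star_dual_deriv ?mulr1.
Qed.

Lemma ip_star_dual_deriv (h : R -> R) : L2 I01 h ->
  ip h (star_dual_deriv eps d dd) = eps * ip h dd - ip h d + mean d * mean h.
Proof.
move=> Lh; have Lepsdd := L2Z mI01 eps Ldd; have Lmean := L2_cst mI01 muI01 (mean d).
have Lepsdd_d := L2B mI01 Lepsdd Ld.
by rewrite /star_dual_deriv ipDr // ipBr // ipZr // (ipC h) ip_cstr.
Qed.

Lemma ip_star_dual (h : R -> R) : L2 I01 h ->
  ip h (star_dual eps d) = eps * ip h d - ip h D + mean d * ip h id.
Proof.
move=> Lh; have Lepsd := L2Z mI01 eps Ld; have LD := L2_primitive_L2 PD.
have Lid := L2_primitive_L2 (@L2_primitive_id R).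
have Lmean_id := L2Z mI01 (mean d) Lid; have Lepsd_D := L2B mI01 Lepsd LD.
by rewrite /star_dual ipDr // ipBr // !ipZr.
Qed.

Lemma star_ip_via_star_dual (e de : R -> R) : L2_primitive e de -> e 1 = 0 ->
  eps * ip de (star_dual_deriv eps d dd) + ip de (star_dual eps d) = star_ip eps e de d dd.
Proof.
move=> Pe e1; have Lde := L2_primitive_L2d Pe.
have de_mean0 : mean de = 0 by rewrite -(L2_primitive1 Pe).
have parts_D : ip de D = - ip e d.
  by apply/eqP; rewrite -addr_eq0 (L2_primitive_by_parts Pe PD) e1 mul0r.
have parts_id : ip de id = - mean e.
  apply/eqP; rewrite -addr_eq0 -[mean e]mul1r -ip_cstr; last exact: L2_primitive_L2 Pe.
  by rewrite (L2_primitive_by_parts Pe L2_primitive_id) e1 mul0r.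
rewrite ip_star_dual_deriv // ip_star_dual // de_mean0 parts_D parts_id /star_ip.
by ring.
Qed.

Lemma star_dual_H10 : d 1 = 0 -> H10 (star_dual eps d) (star_dual_deriv eps d dd).
Proof.
move=> d1; apply/H10P; split; first exact: L2_primitive_star_dual.
by rewrite /star_dual d1 mulr0 sub0r mulr1 addNr.
Qed.

Lemma star_dual_Vh (n : nat) : in_Mh n d -> in_Vh n (star_dual eps d).
Proof.
move=> [_ d_affine _ d1]; split.
- exact: L2_primitive_continuous L2_primitive_star_dual.
- move=> j jn; have [a [b dab]] := d_affine j jn.
  have [|k Dk] := primitive_affine_piece (node_ge0 n j) (node_le1 jn) _ dab.
    exact: L2_integrable Ld.
  exists (- (a / 2)), (eps * a - b + mean d), (eps * b - k) => x xj.
  by rewrite /star_dual dab // Dk //; ring.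
- exact: L2_primitive0 L2_primitive_star_dual.
- by rewrite /star_dual d1 mulr0 sub0r mulr1 addNr.
Qed.

End star_dual_props.
End star_dual.

Section saddle_point_error.
Context {R : realType}.
Variables (eps : R) (f u du : R -> R) (n : nat) (wh dwh uh duh : R -> R).
Hypotheses (Hu : H10 u du)
  (u_weak : forall v dv, H10 v dv -> eps * ip du dv + ip du v = ip f v)
  (Hwh : H10 wh dwh) (Huh : H10 uh duh) (Muh : in_Mh n uh)
  (uh_weak : forall v dv, H10 v dv -> in_Vh n v ->
     ip dwh dv + eps * ip duh dv + ip duh v = ip f v)
  (wh_weak : forall q dq, H10 q dq -> in_Mh n q -> eps * ip dq dwh + ip dq wh = 0).

Let Pu : L2_primitive u du. Proof. by case/H10P: Hu. Qed.
Let u1 : u 1 = 0. Proof. by case/H10P: Hu. Qed.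
Let Pwh : L2_primitive wh dwh. Proof. by case/H10P: Hwh. Qed.
Let wh1 : wh 1 = 0. Proof. by case/H10P: Hwh. Qed.
Let Puh : L2_primitive uh duh. Proof. by case/H10P: Huh. Qed.
Let uh1 : uh 1 = 0. Proof. by case/H10P: Huh. Qed.

Lemma galerkin_orthogonality (v dv : R -> R) : H10 v dv -> in_Vh n v ->
  eps * ip (fun x => du x - duh x) dv + ip (fun x => du x - duh x) v = ip dwh dv.
Proof.
move=> Hv Vv; case/H10P: (Hv) => Pv _.
have [Ldu Lduh] := (L2_primitive_L2d Pu, L2_primitive_L2d Puh).
have [Lv Ldv] := (L2_primitive_L2 Pv, L2_primitive_L2d Pv).
have := u_weak Hv; have := uh_weak Hv Vv.
by rewrite !ipBl //; lra.
Qed.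

Lemma ip_wh_star_dual_deriv (q dq : R -> R) : H10 q dq -> in_Mh n q ->
  ip dwh (star_dual_deriv eps q dq) = 0.
Proof.
move=> Hq Mq; case/H10P: (Hq) => Pq q1.
have := wh_weak Hq Mq; have := L2_primitive_by_parts Pq Pwh.
rewrite ip_star_dual_deriv //; last exact: L2_primitive_L2d Pwh.
rewrite -(L2_primitive1 Pwh) wh1 q1 mul0r mulr0 addr0 (ipC dwh) (ipC dwh q).
by lra.
Qed.

Lemma error_star_orthogonal (q dq : R -> R) : H10 q dq -> in_Mh n q ->
  star_ip eps (fun x => u x - uh x) (fun x => du x - duh x) q dq = 0.
Proof.
move=> Hq Mq; case/H10P: (Hq) => Pq q1.
rewrite -star_ip_via_star_dual //; last 2 first.
- exact: L2_primitiveB.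
- by rewrite u1 uh1 subr0.
rewrite galerkin_orthogonality ?ip_wh_star_dual_deriv //.
- exact: (star_dual_H10 eps Pq q1).
- exact: (star_dual_Vh eps Pq Mq).
Qed.

Lemma star_norm_error_le (p dp : R -> R) : H10 p dp -> in_Mh n p ->
  star_norm eps (fun x => u x - uh x) (fun x => du x - duh x)
  <= star_norm eps (fun x => u x - p x) (fun x => du x - dp x).
Proof.
move=> Hp Mp; case/H10P: (Hp) => Pp p1.
have Pe := L2_primitiveB Pu Puh; have Pd := L2_primitiveB Puh Pp.
have Hd : H10 (fun x => uh x - p x) (fun x => duh x - dp x).
  by apply/H10P; split; rewrite // uh1 p1 subr0.
have -> : (fun x => u x - p x) = (fun x => (u x - uh x) + (uh x - p x)).
  by apply/funext => x; rewrite addrA subrK.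
have -> : (fun x => du x - dp x) = (fun x => (du x - duh x) + (duh x - dp x)).
  by apply/funext => x; rewrite addrA subrK.
apply: star_norm_le_addr (error_star_orthogonal Hd (in_MhB Muh Mp)).
- exact: L2_primitive_L2 Pe.
- exact: L2_primitive_L2d Pe.
- exact: L2_primitive_L2 Pd.
- exact: L2_primitive_L2d Pd.
Qed.

End saddle_point_error.

Theorem theorem3p2 (R : realType) (eps : R) (f : R -> R) (u du : R -> R)
    (n : nat) (wh dwh uh duh : R -> R) (uI duI : R -> R) :
  0 < eps ->
  {within I01, continuous f} ->
  (* u in H^1_0 solves eps (u',v') + (u',v) = (f,v) for all v in H^1_0 *)
  H10 u du ->
  (forall v dv : R -> R, H10 v dv -> eps * ip du dv + ip du v = ip f v) ->
  (2 <= n)%N ->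
  (* (w_h, u_h) in V_h x M_h solves the discrete saddle point system *)
  H10 wh dwh -> in_Vh n wh ->
  H10 uh duh -> in_Mh n uh ->
  (forall v dv : R -> R, H10 v dv -> in_Vh n v ->
     ip dwh dv + eps * ip duh dv + ip duh v = ip f v) ->
  (forall q dq : R -> R, H10 q dq -> in_Mh n q ->
     eps * ip dq dwh + ip dq wh = 0) ->
  (* u_I in M_h is the linear interpolant of u at the nodes *)
  H10 uI duI -> in_Mh n uI ->
  (forall j : nat, (j <= n)%N -> uI (node n j) = u (node n j)) ->
  star_norm eps (fun x => u x - uh x) (fun x => du x - duh x)
    <= inf (Mh_errors eps n u du)
  /\ inf (Mh_errors eps n u du)
    <= star_norm eps (fun x => u x - uI x) (fun x => du x - duI x).
Proof.
move=> _ _ Hu u_weak _ Hwh _ Huh Muh uh_weak wh_weak HuI MuI _.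
have uI_error : Mh_errors eps n u du
    (star_norm eps (fun x => u x - uI x) (fun x => du x - duI x)) by exists uI, duI.
split.
- apply: lb_le_inf; first by eexists; exact: uI_error.
  move=> _ [p [dp [Hp Mp ->]]].
  exact: (star_norm_error_le Hu u_weak Hwh Huh Muh uh_weak wh_weak Hp Mp).
- apply: (ge_inf _ uI_error); exists 0 => _ [p [dp [_ _ ->]]]; exact: sqrtr_ge0.
Qed.
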